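(* Let $\phi\in C^3((0,\infty))$, $\eta=\phi'$ and $\hat\eta(r)=\eta(r)+2\eta(2r)$, and suppose there are constants $0<a_0<\tilde r_1<\tilde r_2<2a_0$ and $a_1>a_0$ such that: $\eta'(r)>0$ for $0<r<\tilde r_1$ and $\eta'(r)<0$ for $r>\tilde r_1$; $\eta''(r)<0$ for $0<r<\tilde r_2$ and $\eta''(r)>0$ for $r>\tilde r_2$; $\hat\eta(r)<0$ for $0<r<a_0$ and $\hat\eta(r)>0$ for $r>a_0$; $\hat\eta'(r)>0$ for $0<r<a_1$ and $\hat\eta'(r)<0$ for $r>a_1$. Let $N,K$ be integers with $K\ge2$ and $K<N-1$. For $\mathbf r=(r_{-N},\dots,r_N)\in(0,\infty)^{2N+1}$ define $\hat{\mathbf\Psi}^E(\mathbf r)=(\hat\psi^E_{-N}(\mathbf r),\dots,\hat\psi^E_N(\mathbf r))$ by $\hat\psi^E_j=\eta(r_j)+2\eta(2r_j)$ for $-N\le j\le -K-2$ and for $K+2\le j\le N$; $\hat\psi^E_{-K-1}=\eta(r_j)+2\eta(2r_j)+\tfrac12\eta(r_j+r_{j+1})$ (with $j=-K-1$); $\hat\psi^E_{-K}=\eta(r_j)+\tfrac12\eta(r_j+r_{j-1})+\tfrac12\eta(r_j+r_{j+1})+\eta(2r_j)$ (with $j=-K$); $\hat\psi^E_{-K+1}=\eta(r_j)+\tfrac12\eta(r_j+r_{j-1})+\eta(r_j+r_{j+1})$ (with $j=-K+1$); $\hat\psi^E_j=\eta(r_j)+\eta(r_j+r_{j-1})+\eta(r_j+r_{j+1})$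 for $-K+2\le j\le K-2$; $\hat\psi^E_{K-1}=\eta(r_j)+\eta(r_j+r_{j-1})+\tfrac12\eta(r_j+r_{j+1})$ (with $j=K-1$); $\hat\psi^E_{K}=\eta(r_j)+\tfrac12\eta(r_j+r_{j-1})+\tfrac12\eta(r_j+r_{j+1})+\eta(2r_j)$ (with $j=K$); $\hat\psi^E_{K+1}=\eta(r_j)+2\eta(2r_j)+\tfrac12\eta(r_j+r_{j-1})$ (with $j=K+1$); and $\hat{\mathbf\Psi}^G(\mathbf r)=(\hat\psi^G_{-N}(\mathbf r),\dots,\hat\psi^G_N(\mathbf r))$ by $\hat\psi^G_j=0$ for $-N\le j\le -K-2$ and for $K+2\le j\le N$; $\hat\psi^G_{-K-1}=-\tfrac12\eta(r_{-K}+r_{-K-1})$; $\hat\psi^G_{-K}=\eta(2r_{-K})-\tfrac12\eta(r_{-K}+r_{-K+1})-\tfrac12\eta(r_{-K}+r_{-K-1})$; $\hat\psi^G_{-K+1}=2\eta(2r_{-K})-\tfrac12\eta(r_{-K}+r_{-K+1})-\eta(r_{-K}+r_{-K-1})$; $\hat\psi^G_j=2\eta(2r_K)-\eta(r_K+r_{K-1})-\eta(r_K+r_{K+1})$ for $-K+2\le j\le K-2$; $\hat\psi^G_{K-1}=2\eta(2r_K)-\tfrac12\eta(r_K+r_{K-1})-\eta(r_K+r_{K+1})$; $\hat\psi^G_{K}=\eta(2r_K)-\tfrac12\eta(r_K+r_{K-1})-\tfrac12\eta(r_K+r_{K+1})$; $\hat\psi^G_{K+1}=-\tfrac12\eta(r_K+r_{K+1})$.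 Suppose $r_L,r_U$ satisfy $\tilde r_2/2<r_L<r_U$ and $\eta'(r_U)+13\eta'(2r_L)>0$, and $\mathbf\Phi\in\mathbb R^{2N+1}$ satisfies $\eta(r_L)+4\eta(2r_L)-2\eta(2r_U)<\Phi_j<\eta(r_U)+4\eta(2r_U)-2\eta(2r_L)$ for $j=-N,\dots,N$. Then for every $\mathbf r^n\in\Omega=(r_L,r_U)^{2N+1}$ there is a unique $\mathbf r^{n+1}\in\Omega$ such that $\hat{\mathbf\Psi}^E(\mathbf r^{n+1})+\hat{\mathbf\Psi}^G(\mathbf r^n)=\mathbf\Phi$. Moreover, the induced mapping $\mathbf r^n\mapsto\mathbf r^{n+1}$ is a contraction: if $\mathbf s^n\in\Omega$ and $\mathbf s^{n+1}$ is its image, then $\|\mathbf r^{n+1}-\mathbf s^{n+1}\|_\infty\le\frac{8|\eta'(2r_L)|}{\eta'(r_U)-5|\eta'(2r_L)|}\|\mathbf r^n-\mathbf s^n\|_\infty$, where $\frac{8|\eta'(2r_L)|}{\eta'(r_U)-5|\eta'(2r_L)|}<1$.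
   Context: $\|\mathbf r\|_\infty=\max_{-N\le i\le N}|r_i|$. $\hat{\mathbf\Psi}^E$ is the internal conjugate force of the energy-based quasicontinuum approximation and $\hat{\mathbf\Psi}^G$ the (symmetrized) ghost-force correction, for a one-dimensional chain with nearest and next-nearest neighbour pair interactions given by $\phi$; the iteration is the ghost force iteration. *)

From Stdlib Require Import Reals Lra Lia ZArith List.
From Coquelicot Require Import Coquelicot.
Open Scope R_scope.

(* Vectors r = (r_{-N},...,r_N) are represented as functions Z -> R;
   only the indices -N <= j <= N are meaningful. *)

Definition C3_chain (phi eta eta1 eta2 eta3 : R -> R) : Prop :=
  (forall r, 0 < r -> is_derive phi r (eta r)) /\
  (forall r, 0 < r -> is_derive eta r (eta1 r)) /\
  (forall r, 0 < r -> is_derive eta1 r (eta2 r)) /\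
  (forall r, 0 < r -> is_derive eta2 r (eta3 r)) /\
  (forall r, 0 < r -> continuous eta3 r).

Definition eta_hat (eta : R -> R) (r : R) : R := eta r + 2 * eta (2 * r).

Definition psiE (eta : R -> R) (K : Z) (r : Z -> R) (j : Z) : R :=
  if (j <=? -K - 2)%Z then eta (r j) + 2 * eta (2 * r j)
  else if (j =? -K - 1)%Z then
    eta (r j) + 2 * eta (2 * r j) + / 2 * eta (r j + r (j + 1)%Z)
  else if (j =? -K)%Z then
    eta (r j) + / 2 * eta (r j + r (j - 1)%Z) + / 2 * eta (r j + r (j + 1)%Z)
      + eta (2 * r j)
  else if (j =? -K + 1)%Z then
    eta (r j) + / 2 * eta (r j + r (j - 1)%Z) + eta (r j + r (j + 1)%Z)
  else if (j <=? K - 2)%Z then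
    eta (r j) + eta (r j + r (j - 1)%Z) + eta (r j + r (j + 1)%Z)
  else if (j =? K - 1)%Z then
    eta (r j) + eta (r j + r (j - 1)%Z) + / 2 * eta (r j + r (j + 1)%Z)
  else if (j =? K)%Z then
    eta (r j) + / 2 * eta (r j + r (j - 1)%Z) + / 2 * eta (r j + r (j + 1)%Z)
      + eta (2 * r j)
  else if (j =? K + 1)%Z then
    eta (r j) + 2 * eta (2 * r j) + / 2 * eta (r j + r (j - 1)%Z)
  else eta (r j) + 2 * eta (2 * r j).

(* (symmetrized) ghost-force correction, transcribed literally *)
Definition psiG (eta : R -> R) (K : Z) (r : Z -> R) (j : Z) : R :=
  if (j <=? -K - 2)%Z then 0
  else if (j =? -K - 1)%Z then - / 2 * eta (r (-K)%Z + r (-K - 1)%Z)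
  else if (j =? -K)%Z then
    eta (2 * r (-K)%Z) - / 2 * eta (r (-K)%Z + r (-K + 1)%Z)
      - / 2 * eta (r (-K)%Z + r (-K - 1)%Z)
  else if (j =? -K + 1)%Z then
    2 * eta (2 * r (-K)%Z) - / 2 * eta (r (-K)%Z + r (-K + 1)%Z)
      - eta (r (-K)%Z + r (-K - 1)%Z)
  else if (j <=? K - 2)%Z then
    2 * eta (2 * r K) - eta (r K + r (K - 1)%Z) - eta (r K + r (K + 1)%Z)
  else if (j =? K - 1)%Z then
    2 * eta (2 * r K) - / 2 * eta (r K + r (K - 1)%Z) - eta (r K + r (K + 1)%Z)
  else if (j =? K)%Z then
    eta (2 * r K) - / 2 * eta (r K + r (K - 1)%Z) - / 2 * eta (r K + r (K + 1)%Z)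
  else if (j =? K + 1)%Z then - / 2 * eta (r K + r (K + 1)%Z)
  else 0.

Definition in_range (N j : Z) : Prop := (-N <= j <= N)%Z.

Definition in_Omega (N : Z) (rL rU : R) (r : Z -> R) : Prop :=
  forall j, in_range N j -> rL < r j < rU.

Definition gfi_step (eta : R -> R) (N K : Z) (Phi r r' : Z -> R) : Prop :=
  forall j, in_range N j -> psiE eta K r' j + psiG eta K r j = Phi j.

Definition supnorm (N : Z) (v : Z -> R) : R :=
  fold_right Rmax 0
    (map (fun k : nat => Rabs (v (Z.of_nat k - N)%Z)) (seq 0 (Z.to_nat (2 * N + 1)))).

From Stdlib Require Import Reals ZArith Lra Lia List.
From Coquelicot Require Import Coquelicot.
Open Scope R_scope.

(* On [2 rL, oo) the force eta is nonincreasing and Lipschitz with constant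
   a = |eta'(2 rL)| (there eta' < 0 increases), while on [rL, rU] its difference
   quotients lie in [eta'(rU), eta'(rL)] with eta'(rU) > 13 a.  Hence psiE is diagonally
   dominant on the box [rL, rU]^(2N+1): its j-th component grows in r_j with slope at
   least eta'(rU) and depends on the other coordinates only through a 5a-Lipschitz
   remainder, while psiG is 8a-Lipschitz.  The bounds on Phi make the residual
   psiE(r) + psiG(r^n) - Phi negative on the faces r_j = rL and positive on the faces
   r_j = rU, so a relaxation of the residual maps the box into its interior and is a
   contraction; its fixed point is the next iterate.  Diagonal dominance also gives
   (eta'(rU) - 5a) ||r^(n+1) - s^(n+1)|| <= ||psiG(r^n) - psiG(s^n)|| <= 8a ||r^n - s^n||,
   the contraction estimate, and for r^n = s^n uniqueness. *)

Lemma fold_Rmax_attained {A : Type} (f : A -> R) (l : list A) :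
  fold_right Rmax 0 (map f l) = 0 \/
  exists k, In k l /\ fold_right Rmax 0 (map f l) = f k.
Proof.
  induction l as [|h t [IH | [k [Hk IH]]]]; simpl; auto.
  - rewrite IH. unfold Rmax. destruct (Rle_dec (f h) 0); eauto.
  - rewrite IH. unfold Rmax. destruct (Rle_dec (f h) (f k)); eauto.
Qed.

Lemma fold_Rmax_ge {A : Type} (f : A -> R) (l : list A) k :
  In k l -> f k <= fold_right Rmax 0 (map f l).
Proof.
  induction l as [|h t IH]; simpl; [tauto|].
  intros [->|Hk]; [apply Rmax_l|]. eapply Rle_trans; [apply IH, Hk | apply Rmax_r].
Qed.

Lemma fold_Rmax_nonneg {A : Type} (f : A -> R) (l : list A) :
  0 <= fold_right Rmax 0 (map f l).
Proof.
  induction l as [|h t IH]; simpl; [lra|]. eapply Rle_trans; [apply IH | apply Rmax_r].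
Qed.

Lemma supnorm_nonneg N v : 0 <= supnorm N v.
Proof. apply fold_Rmax_nonneg. Qed.

Lemma Rabs_le_supnorm N v j : in_range N j -> Rabs (v j) <= supnorm N v.
Proof.
  intros Hj. unfold supnorm, in_range in *.
  replace (v j) with (v (Z.of_nat (Z.to_nat (j + N)) - N)%Z) by (f_equal; lia).
  apply (fold_Rmax_ge (fun k : nat => Rabs (v (Z.of_nat k - N)%Z))).
  apply in_seq. lia.
Qed.

Lemma supnorm_attained N v :
  supnorm N v = 0 \/ exists j, in_range N j /\ supnorm N v = Rabs (v j).
Proof.
  destruct (fold_Rmax_attained (fun k : nat => Rabs (v (Z.of_nat k - N)%Z))
              (seq 0 (Z.to_nat (2 * N + 1)))) as [H0 | [k [Hk E]]]; [now left|].
  right. apply in_seq in Hk. exists (Z.of_nat k - N)%Z.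
  split; [unfold in_range; lia | exact E].
Qed.

Lemma supnorm_le N v B :
  0 <= B -> (forall j, in_range N j -> Rabs (v j) <= B) -> supnorm N v <= B.
Proof.
  intros HB Hv. destruct (supnorm_attained N v) as [-> | [j [Hj ->]]]; auto.
Qed.

Lemma supnorm_ext N v w :
  (forall j, in_range N j -> v j = w j) -> supnorm N v = supnorm N w.
Proof.
  intros Hvw. apply Rle_antisym; apply supnorm_le; try apply supnorm_nonneg;
    intros j Hj; [rewrite Hvw | rewrite <- Hvw]; auto; apply Rabs_le_supnorm; auto.
Qed.

Definition in_box (N : Z) (l u : R) (x : Z -> R) : Prop :=
  forall k, in_range N k -> l <= x k <= u.

Lemma in_Omega_in_box N l u x : in_Omega N l u x -> in_box N l u x.
Proof. intros Hx k Hk. specialize (Hx k Hk). lra. Qed.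

Definition set_coord (x : Z -> R) (j : Z) (v : R) (k : Z) : R :=
  if Z.eq_dec k j then v else x k.

Lemma set_coord_eq x j v : set_coord x j v j = v.
Proof. unfold set_coord. destruct (Z.eq_dec j j); congruence. Qed.

Lemma set_coord_in_box N l u x j v :
  in_box N l u x -> l <= v <= u -> in_box N l u (set_coord x j v).
Proof. intros Hx Hv k Hk. unfold set_coord. destruct (Z.eq_dec k j); auto. Qed.

Lemma supnorm_sub_set_coord N x j v :
  supnorm N (fun k => x k - set_coord x j v k) <= Rabs (x j - v).
Proof.
  apply supnorm_le; [apply Rabs_pos|]. intros k _. unfold set_coord.
  destruct (Z.eq_dec k j) as [->|_]; [lra|].
  rewrite Rminus_eq_0, Rabs_R0. apply Rabs_pos.
Qed.

Section BoxContraction.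

Variables (N : Z) (l u q : R) (T : (Z -> R) -> Z -> R).
Hypothesis q_range : 0 <= q < 1.
Hypothesis T_in_box : forall x, in_box N l u x -> in_box N l u (T x).
Hypothesis T_contraction : forall x y, in_box N l u x -> in_box N l u y ->
  supnorm N (fun j => T x j - T y j) <= q * supnorm N (fun j => x j - y j).

Variable x0 : Z -> R.
Hypothesis x0_in_box : in_box N l u x0.

Definition iterate k := Nat.iter k T x0.
Definition first_step := supnorm N (fun j => iterate 1 j - iterate 0 j).
Definition iterate_tail k := q ^ k * first_step / (1 - q).

Lemma iterate_succ k : iterate (S k) = T (iterate k).
Proof. reflexivity. Qed.

Lemma iterate_in_box k : in_box N l u (iterate k).
Proof. induction k; [exact x0_in_box | rewrite iterate_succ; auto]. Qed.

Lemma iterate_step_le k :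
  supnorm N (fun j => iterate (S k) j - iterate k j) <= q ^ k * first_step.
Proof.
  induction k as [|k IH]; [unfold first_step; simpl; lra|].
  eapply Rle_trans; [apply (T_contraction (iterate (S k)) (iterate k)); apply iterate_in_box|].
  simpl pow. rewrite Rmult_assoc. apply Rmult_le_compat_l; [lra | exact IH].
Qed.

Lemma iterate_tail_nonneg k : 0 <= iterate_tail k.
Proof.
  unfold iterate_tail. apply Rmult_le_pos; [apply Rmult_le_pos|].
  - apply pow_le; lra.
  - apply supnorm_nonneg.
  - apply Rlt_le, Rinv_0_lt_compat; lra.
Qed.

Lemma iterate_tail_succ k : iterate_tail (S k) = q * iterate_tail k.
Proof. unfold iterate_tail. simpl. field. lra. Qed.

Lemma iterate_tail_cvg : is_lim_seq iterate_tail 0.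
Proof.
  unfold iterate_tail.
  replace (Finite 0) with (Rbar_mult (Rbar_mult 0 first_step) (/ (1 - q)))
    by (simpl; f_equal; ring).
  apply is_lim_seq_scal_r, is_lim_seq_scal_r, is_lim_seq_geom. rewrite Rabs_pos_eq; lra.
Qed.

Lemma iterate_dist_le k n j : (k <= n)%nat -> in_range N j ->
  Rabs (iterate n j - iterate k j) <= iterate_tail k.
Proof.
  intros Hkn Hj. replace n with (k + (n - k))%nat by lia.
  enough (Rabs (iterate (k + (n - k)) j - iterate k j)
          <= iterate_tail k - iterate_tail (k + (n - k)))
    by (pose proof (iterate_tail_nonneg (k + (n - k))); lra).
  induction (n - k)%nat as [|d IH].
  - rewrite Nat.add_0_r, Rminus_eq_0, Rabs_R0. lra.
  - rewrite Nat.add_succ_r.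
    replace (iterate (S (k + d)) j - iterate k j) with
      ((iterate (S (k + d)) j - iterate (k + d) j) + (iterate (k + d) j - iterate k j))
      by ring.
    eapply Rle_trans; [apply Rabs_triang|].
    pose proof (Rle_trans _ _ _ (Rabs_le_supnorm N _ j Hj) (iterate_step_le (k + d))).
    assert (iterate_tail (k + d) - iterate_tail (S (k + d)) = q ^ (k + d) * first_step)
      by (rewrite iterate_tail_succ; unfold iterate_tail; field; lra).
    lra.
Qed.

Definition iterate_limit j := real (Lim_seq (fun k => iterate k j)).

Lemma iterate_cvg j : in_range N j -> is_lim_seq (fun k => iterate k j) (iterate_limit j).
Proof.
  intros Hj. apply Lim_seq_correct', ex_lim_seq_cauchy_corr. intros eps.
  destruct (proj2 (is_lim_seq_spec _ _) iterate_tail_cvg (pos_div_2 eps)) as [M HM].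
  exists M. intros n m Hn Hm. specialize (HM M (le_n M)). simpl in HM.
  rewrite Rminus_0_r, Rabs_pos_eq in HM by apply iterate_tail_nonneg.
  pose proof (iterate_dist_le M n j Hn Hj). pose proof (iterate_dist_le M m j Hm Hj).
  replace (iterate n j - iterate m j)
    with ((iterate n j - iterate M j) - (iterate m j - iterate M j)) by ring.
  eapply Rle_lt_trans; [apply Rabs_triang|]. rewrite Rabs_Ropp. lra.
Qed.

Lemma iterate_limit_dist_le k j : in_range N j ->
  Rabs (iterate k j - iterate_limit j) <= iterate_tail k.
Proof.
  intros Hj. rewrite Rabs_minus_sym.
  change (Rbar_le (Rabs (iterate_limit j - iterate k j)) (iterate_tail k)).
  apply (is_lim_seq_le_loc (fun n => Rabs (iterate n j - iterate k j)) (fun _ => iterate_tail k)).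
  - exists k. intros n Hn. exact (iterate_dist_le k n j Hn Hj).
  - apply (is_lim_seq_abs _ (Finite (iterate_limit j - iterate k j))), is_lim_seq_minus';
      [apply iterate_cvg, Hj | apply is_lim_seq_const].
  - apply is_lim_seq_const.
Qed.

Lemma iterate_limit_in_box : in_box N l u iterate_limit.
Proof.
  intros j Hj. split.
  - apply (is_lim_seq_le (fun _ => l) (fun k => iterate k j) l (iterate_limit j));
      [intros k; apply (iterate_in_box k j Hj) | apply is_lim_seq_const | apply iterate_cvg, Hj].
  - apply (is_lim_seq_le (fun k => iterate k j) (fun _ => u) (iterate_limit j) u);
      [intros k; apply (iterate_in_box k j Hj) | apply iterate_cvg, Hj | apply is_lim_seq_const].
Qed.

Lemma iterate_limit_defect_le k j : in_range N j ->
  Rabs (T iterate_limit j - iterate_limit j) <= 2 * iterate_tail k.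
Proof.
  intros Hj.
  pose proof (iterate_limit_dist_le (S k) j Hj) as Hnext. rewrite iterate_tail_succ in Hnext.
  set (x := iterate_limit) in *.
  assert (HT : supnorm N (fun i => T x i - T (iterate k) i) <= q * iterate_tail k).
  { eapply Rle_trans;
      [apply T_contraction; [apply iterate_limit_in_box | apply iterate_in_box]|].
    apply Rmult_le_compat_l; [lra|]. apply supnorm_le; [apply iterate_tail_nonneg|].
    intros i Hi. rewrite Rabs_minus_sym. apply iterate_limit_dist_le, Hi. }
  pose proof (Rabs_le_supnorm N (fun i => T x i - T (iterate k) i) j Hj).
  assert (q * iterate_tail k <= iterate_tail k) by (pose proof (iterate_tail_nonneg k); nra).
  replace (T x j - x j) with ((T x j - T (iterate k) j) + (iterate (S k) j - x j))
    by (rewrite iterate_succ; ring).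
  eapply Rle_trans; [apply Rabs_triang|]. lra.
Qed.

Lemma box_contraction_fixpoint :
  exists x, in_box N l u x /\ forall j, in_range N j -> T x j = x j.
Proof.
  exists iterate_limit. split; [exact iterate_limit_in_box|]. intros j Hj.
  set (defect := Rabs (T iterate_limit j - iterate_limit j)).
  assert (Hdefect : defect <= 0).
  { change (Rbar_le defect 0).
    apply (is_lim_seq_le (fun _ => defect) (fun k => 2 * iterate_tail k));
      [intros k; apply iterate_limit_defect_le, Hj | apply is_lim_seq_const |].
    replace (Finite 0) with (Rbar_mult 2 0) by (simpl; f_equal; ring).
    apply is_lim_seq_scal_l, iterate_tail_cvg. }
  pose proof (Rabs_pos (T iterate_limit j - iterate_limit j)).
  apply Rminus_diag_uniq, Rabs_eq_0. unfold defect in Hdefect. lra.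
Qed.

End BoxContraction.

Section DiagonallyDominant.

Variables (N : Z) (l u lo hi c : R) (E : (Z -> R) -> Z -> R).
Hypothesis c_lt_lo : 0 <= c < lo.
Hypothesis lo_le_hi : lo <= hi.
Hypothesis E_diag : forall x y j, in_box N l u x -> in_box N l u y -> in_range N j ->
  exists p, lo <= p <= hi /\
    Rabs (E x j - E y j - p * (x j - y j)) <= c * supnorm N (fun k => x k - y k).

Lemma diag_dominant_lower_bound x y : in_box N l u x -> in_box N l u y ->
  (lo - c) * supnorm N (fun k => x k - y k) <= supnorm N (fun k => E x k - E y k).
Proof.
  intros Hx Hy.
  destruct (supnorm_attained N (fun k => x k - y k)) as [-> | [j [Hj Hm]]].
  - rewrite Rmult_0_r. apply supnorm_nonneg.
  - destruct (E_diag x y j Hx Hy Hj) as [p [Hp Hd]]. rewrite Hm in *.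
    assert (Hlo : lo * Rabs (x j - y j) <= Rabs (p * (x j - y j))).
    { rewrite Rabs_mult, (Rabs_pos_eq p) by lra.
      apply Rmult_le_compat_r; [apply Rabs_pos | lra]. }
    pose proof (Rabs_triang_inv (p * (x j - y j)) (p * (x j - y j) - (E x j - E y j))) as Htri.
    replace (p * (x j - y j) - (p * (x j - y j) - (E x j - E y j))) with (E x j - E y j)
      in Htri by ring.
    rewrite Rabs_minus_sym in Htri.
    pose proof (Rabs_le_supnorm N (fun k => E x k - E y k) j Hj).
    lra.
Qed.

Lemma diag_dominant_unique x y : in_box N l u x -> in_box N l u y ->
  (forall j, in_range N j -> E x j = E y j) -> forall j, in_range N j -> x j = y j.
Proof.
  intros Hx Hy Exy j Hj.
  assert (HE : supnorm N (fun k => E x k - E y k) = 0).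
  { apply Rle_antisym; [|apply supnorm_nonneg]. apply supnorm_le; [lra|].
    intros k Hk. rewrite Exy, Rminus_eq_0, Rabs_R0 by exact Hk. lra. }
  pose proof (diag_dominant_lower_bound x y Hx Hy) as Hlow. rewrite HE in Hlow.
  pose proof (Rabs_le_supnorm N (fun k => x k - y k) j Hj).
  assert (Rabs (x j - y j) = 0) as Z by (pose proof (Rabs_pos (x j - y j)); nra).
  apply Rabs_eq_0 in Z. lra.
Qed.

Variable b : Z -> R.
Hypothesis l_le_u : l <= u.
Hypothesis lower_face : forall x j, in_box N l u x -> in_range N j -> x j = l -> E x j < b j.
Hypothesis upper_face : forall x j, in_box N l u x -> in_range N j -> x j = u -> b j < E x j.

(* The residual [E x j - b j] has slope in [lo, hi] in its own coordinate and varies by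
   at most [c * supnorm] through the others, so subtracting it divided by [hi + c] moves
   the faces of the box inwards and contracts by the factor [1 - (lo - c) / (hi + c)]. *)
Definition relax_step (x : Z -> R) (j : Z) : R := x j - (E x j - b j) / (hi + c).

Lemma relax_factor_range : 0 <= 1 - (lo - c) / (hi + c) < 1.
Proof.
  assert (0 < (lo - c) / (hi + c)) by (apply Rdiv_lt_0_compat; lra).
  assert ((lo - c) / (hi + c) <= 1).
  { apply Rmult_le_reg_r with (hi + c); [lra|]. unfold Rdiv.
    rewrite Rmult_assoc, Rinv_l by lra. lra. }
  lra.
Qed.

Lemma relax_weight_pos : 0 < / (hi + c).
Proof. apply Rinv_0_lt_compat. lra. Qed.

Lemma relax_weight_le p : p <= hi -> / (hi + c) * (p + c) <= 1.
Proof.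
  intros Hp. replace 1 with (/ (hi + c) * (hi + c)) by (field; lra).
  apply Rmult_le_compat_l; [apply Rlt_le, relax_weight_pos | lra].
Qed.

Lemma E_diag_set_coord x j v : in_box N l u x -> in_range N j -> l <= v <= u ->
  exists p, lo <= p <= hi /\
    Rabs (E x j - E (set_coord x j v) j - p * (x j - v)) <= c * Rabs (x j - v).
Proof.
  intros Hx Hj Hv.
  destruct (E_diag x (set_coord x j v) j Hx (set_coord_in_box N l u x j v Hx Hv) Hj)
    as [p [Hp Hd]].
  exists p. split; [exact Hp|]. rewrite set_coord_eq in Hd.
  eapply Rle_trans; [exact Hd|].
  apply Rmult_le_compat_l; [lra | apply supnorm_sub_set_coord].
Qed.

Lemma relax_step_in_open_box x j : in_box N l u x -> in_range N j -> l < relax_step x j < u.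
Proof.
  intros Hx Hj. pose proof (Hx j Hj) as Hxj. pose proof relax_weight_pos as Hw.
  unfold relax_step, Rdiv. rewrite (Rmult_comm _ (/ (hi + c))).
  split.
  - destruct (E_diag_set_coord x j l Hx Hj ltac:(lra)) as [p [Hp Hd]].
    pose proof (lower_face (set_coord x j l) j
                  (set_coord_in_box N l u x j l Hx ltac:(lra)) Hj (set_coord_eq x j l)).
    rewrite (Rabs_pos_eq (x j - l)) in Hd by lra. apply Rabs_le_between in Hd.
    assert (0 < / (hi + c) * ((p + c) * (x j - l) - (E x j - b j)))
      by (apply Rmult_lt_0_compat; lra).
    assert (0 <= (1 - / (hi + c) * (p + c)) * (x j - l))
      by (apply Rmult_le_pos; [pose proof (relax_weight_le p (proj2 Hp)) |]; lra).
    lra.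
  - destruct (E_diag_set_coord x j u Hx Hj ltac:(lra)) as [p [Hp Hd]].
    pose proof (upper_face (set_coord x j u) j
                  (set_coord_in_box N l u x j u Hx ltac:(lra)) Hj (set_coord_eq x j u)).
    rewrite (Rabs_minus_sym (x j)), (Rabs_pos_eq (u - x j)) in Hd by lra.
    apply Rabs_le_between in Hd.
    assert (0 < / (hi + c) * ((E x j - b j) + (p + c) * (u - x j)))
      by (apply Rmult_lt_0_compat; lra).
    assert (0 <= (1 - / (hi + c) * (p + c)) * (u - x j))
      by (apply Rmult_le_pos; [pose proof (relax_weight_le p (proj2 Hp)) |]; lra).
    lra.
Qed.

Lemma relax_step_contraction x y : in_box N l u x -> in_box N l u y ->
  supnorm N (fun j => relax_step x j - relax_step y j)
  <= (1 - (lo - c) / (hi + c)) * supnorm N (fun j => x j - y j).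
Proof.
  intros Hx Hy. apply supnorm_le.
  { apply Rmult_le_pos; [apply relax_factor_range | apply supnorm_nonneg]. }
  intros j Hj. destruct (E_diag x y j Hx Hy Hj) as [p [Hp Hd]].
  pose proof (Rabs_le_supnorm N (fun k => x k - y k) j Hj) as Hxy.
  pose proof relax_weight_pos as Hw. pose proof (relax_weight_le p (proj2 Hp)) as Hwp.
  set (m := supnorm N (fun k => x k - y k)) in *.
  set (e := E x j - E y j - p * (x j - y j)) in *.
  set (w := / (hi + c)) in *.
  replace (relax_step x j - relax_step y j) with ((x j - y j) - w * (p * (x j - y j) + e))
    by (unfold relax_step, e, w; field; lra).
  replace ((lo - c) / (hi + c)) with (w * (lo - c)) by (unfold w; field; lra).
  apply Rabs_le_between in Hxy. apply Rabs_le_between in Hd. apply Rabs_le_between.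
  assert (0 <= 1 - w * p) by nra.
  assert (0 <= w * (p - lo) * m) by (apply Rmult_le_pos; nra).
  split; nra.
Qed.

Lemma diag_dominant_solvable :
  exists x, in_Omega N l u x /\ forall j, in_range N j -> E x j = b j.
Proof.
  assert (Hbox : forall x, in_box N l u x -> in_box N l u (relax_step x)).
  { intros x Hx j Hj. pose proof (relax_step_in_open_box x j Hx Hj). lra. }
  destruct (box_contraction_fixpoint N l u _ relax_step relax_factor_range Hbox
              relax_step_contraction (fun _ => l) ltac:(intros k _; lra)) as [x [Hx Hfix]].
  exists x. split.
  - intros j Hj. rewrite <- (Hfix j Hj). apply relax_step_in_open_box; auto.
  - intros j Hj.
    assert (Hres : E x j - b j = (x j - relax_step x j) * (hi + c))
      by (unfold relax_step; field; lra).
    rewrite (Hfix j Hj), Rminus_eq_0, Rmult_0_l in Hres. lra.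
Qed.

End DiagonallyDominant.

Ltac destruct_index_tests :=
  repeat match goal with
  | |- context [ (?i <=? ?k)%Z ] => destruct (Z.leb_spec i k)
  | |- context [ (?i =? ?k)%Z ] => destruct (Z.eqb_spec i k)
  end; cbv beta iota.

Ltac index_in_range := unfold in_range in *; lia.

(* Every branch of [psiE] and [psiG] is a linear combination of the values
   [eta (x i + x k)] and [eta (2 * x i)]; this records the given bound for each such
   term of the goal, after which [lra] closes the branch. *)
Ltac bound_eta_terms eta x sum_bound double_bound :=
  repeat match goal with
  | |- context [eta (x ?i + x ?k)] =>
      lazymatch goal with
      | _ : context [eta (x i + x k)] |- _ => fail
      | _ => let H := fresh in
             pose proof (sum_bound i k ltac:(index_in_range) ltac:(index_in_range)) as H;
             try apply Rabs_le_between in H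
      end
  | |- context [eta (2 * x ?i)] =>
      lazymatch goal with
      | _ : context [eta (2 * x i)] |- _ => fail
      | _ => let H := fresh in
             pose proof (double_bound i ltac:(index_in_range)) as H;
             try apply Rabs_le_between in H
      end
  end.

Section ForceLipschitz.

Variables (eta : R -> R) (N K : Z) (rL rU a : R).
Hypothesis K_ge_1 : (1 <= K)%Z.
Hypothesis K_lt_N : (K < N)%Z.
Hypothesis a_nonneg : 0 <= a.
Hypothesis eta_lipschitz : forall u v, 2 * rL <= u -> 2 * rL <= v ->
  Rabs (eta u - eta v) <= a * Rabs (u - v).

Variables x y : Z -> R.
Hypothesis x_in_box : in_box N rL rU x.
Hypothesis y_in_box : in_box N rL rU y.

Lemma eta_sum_lipschitz i k : in_range N i -> in_range N k ->
  Rabs (eta (x i + x k) - eta (y i + y k)) <= 2 * a * supnorm N (fun n => x n - y n).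
Proof.
  intros Hi Hk. pose proof (x_in_box i Hi). pose proof (x_in_box k Hk).
  pose proof (y_in_box i Hi). pose proof (y_in_box k Hk).
  eapply Rle_trans; [apply eta_lipschitz; lra|]. rewrite (Rmult_comm 2 a), Rmult_assoc.
  apply Rmult_le_compat_l; [exact a_nonneg|].
  replace (x i + x k - (y i + y k)) with ((x i - y i) + (x k - y k)) by ring.
  eapply Rle_trans; [apply Rabs_triang|].
  pose proof (Rabs_le_supnorm N (fun n => x n - y n) i Hi).
  pose proof (Rabs_le_supnorm N (fun n => x n - y n) k Hk). lra.
Qed.

Lemma eta_double_lipschitz i : in_range N i ->
  Rabs (eta (2 * x i) - eta (2 * y i)) <= 2 * a * supnorm N (fun n => x n - y n).
Proof.
  intros Hi. replace (2 * x i) with (x i + x i) by ring.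
  replace (2 * y i) with (y i + y i) by ring. apply eta_sum_lipschitz; exact Hi.
Qed.

Lemma psiE_offdiag_lipschitz j : in_range N j ->
  Rabs (psiE eta K x j - psiE eta K y j - (eta (x j) - eta (y j)))
  <= 5 * a * supnorm N (fun n => x n - y n).
Proof.
  intros Hj. pose proof (supnorm_nonneg N (fun n => x n - y n)).
  assert (0 <= a * supnorm N (fun n => x n - y n)) by (apply Rmult_le_pos; lra).
  apply Rabs_le_between. unfold psiE. destruct_index_tests;
    bound_eta_terms eta x eta_sum_lipschitz eta_double_lipschitz; lra.
Qed.

Lemma psiG_lipschitz j : in_range N j ->
  Rabs (psiG eta K x j - psiG eta K y j) <= 8 * a * supnorm N (fun n => x n - y n).
Proof.
  intros Hj. pose proof (supnorm_nonneg N (fun n => x n - y n)).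
  assert (0 <= a * supnorm N (fun n => x n - y n)) by (apply Rmult_le_pos; lra).
  apply Rabs_le_between. unfold psiG. destruct_index_tests;
    bound_eta_terms eta x eta_sum_lipschitz eta_double_lipschitz; lra.
Qed.

End ForceLipschitz.

Section ForceBounds.

Variables (eta : R -> R) (N K : Z) (rL rU : R) (Phi : Z -> R).
Hypothesis K_ge_1 : (1 <= K)%Z.
Hypothesis K_lt_N : (K < N)%Z.
Hypothesis eta_nonincreasing : forall u v, 2 * rL <= u <= v -> eta v <= eta u.
Hypothesis Phi_bounds : forall j, in_range N j ->
  eta rL + 4 * eta (2 * rL) - 2 * eta (2 * rU) < Phi j /\
  Phi j < eta rU + 4 * eta (2 * rU) - 2 * eta (2 * rL).

Lemma eta_sum_bounds x : in_box N rL rU x -> forall i k, in_range N i -> in_range N k ->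
  eta (2 * rU) <= eta (x i + x k) <= eta (2 * rL).
Proof.
  intros Hx i k Hi Hk. pose proof (Hx i Hi). pose proof (Hx k Hk).
  split; apply eta_nonincreasing; lra.
Qed.

Lemma eta_double_bounds x : in_box N rL rU x -> forall i, in_range N i ->
  eta (2 * rU) <= eta (2 * x i) <= eta (2 * rL).
Proof.
  intros Hx i Hi. replace (2 * x i) with (x i + x i) by ring. apply eta_sum_bounds; auto.
Qed.

Lemma psiE_lower_face x rn j : in_box N rL rU x -> in_box N rL rU rn -> in_range N j ->
  x j = rL -> psiE eta K x j < Phi j - psiG eta K rn j.
Proof.
  intros Hx Hrn Hj Hxj. pose proof (Hx j Hj).
  assert (eta (2 * rU) <= eta (2 * rL)) by (apply eta_nonincreasing; lra).
  destruct (Phi_bounds j Hj). assert (eta (x j) = eta rL) by now rewrite Hxj.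
  unfold psiE, psiG. destruct_index_tests;
    bound_eta_terms eta x (eta_sum_bounds x Hx) (eta_double_bounds x Hx);
    bound_eta_terms eta rn (eta_sum_bounds rn Hrn) (eta_double_bounds rn Hrn); lra.
Qed.

Lemma psiE_upper_face x rn j : in_box N rL rU x -> in_box N rL rU rn -> in_range N j ->
  x j = rU -> Phi j - psiG eta K rn j < psiE eta K x j.
Proof.
  intros Hx Hrn Hj Hxj. pose proof (Hx j Hj).
  assert (eta (2 * rU) <= eta (2 * rL)) by (apply eta_nonincreasing; lra).
  destruct (Phi_bounds j Hj). assert (eta (x j) = eta rU) by now rewrite Hxj.
  unfold psiE, psiG. destruct_index_tests;
    bound_eta_terms eta x (eta_sum_bounds x Hx) (eta_double_bounds x Hx);
    bound_eta_terms eta rn (eta_sum_bounds rn Hrn) (eta_double_bounds rn Hrn); lra.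
Qed.

End ForceBounds.

Section GhostForceIteration.

Variables (eta : R -> R) (N K : Z) (rL rU a lo hi : R) (Phi : Z -> R).
Hypothesis K_ge_1 : (1 <= K)%Z.
Hypothesis K_lt_N : (K < N)%Z.
Hypothesis rL_le_rU : rL <= rU.
Hypothesis a_nonneg : 0 <= a.
Hypothesis diag_dominance : 5 * a < lo.
Hypothesis lo_le_hi : lo <= hi.
Hypothesis eta_lipschitz : forall u v, 2 * rL <= u -> 2 * rL <= v ->
  Rabs (eta u - eta v) <= a * Rabs (u - v).
Hypothesis eta_nonincreasing : forall u v, 2 * rL <= u <= v -> eta v <= eta u.
Hypothesis eta_slope : forall u v, rL <= u <= rU -> rL <= v <= rU ->
  exists p, lo <= p <= hi /\ eta u - eta v = p * (u - v).
Hypothesis Phi_bounds : forall j, in_range N j ->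
  eta rL + 4 * eta (2 * rL) - 2 * eta (2 * rU) < Phi j /\
  Phi j < eta rU + 4 * eta (2 * rU) - 2 * eta (2 * rL).

Lemma psiE_diag_dominant x y j : in_box N rL rU x -> in_box N rL rU y -> in_range N j ->
  exists p, lo <= p <= hi /\
    Rabs (psiE eta K x j - psiE eta K y j - p * (x j - y j))
    <= 5 * a * supnorm N (fun k => x k - y k).
Proof.
  intros Hx Hy Hj. destruct (eta_slope (x j) (y j) (Hx j Hj) (Hy j Hj)) as [p [Hp Ep]].
  exists p. split; [exact Hp|]. rewrite <- Ep.
  exact (psiE_offdiag_lipschitz eta N K rL rU a K_ge_1 K_lt_N a_nonneg eta_lipschitz
           x y Hx Hy j Hj).
Qed.

Let diag_margin : 0 <= 5 * a < lo.
Proof. lra. Qed.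

Lemma gfi_step_exists_unique rn : in_Omega N rL rU rn ->
  exists rn1, in_Omega N rL rU rn1 /\ gfi_step eta N K Phi rn rn1 /\
    forall s, in_Omega N rL rU s -> gfi_step eta N K Phi rn s ->
      forall j, in_range N j -> s j = rn1 j.
Proof.
  intros Hrn. pose proof (in_Omega_in_box N rL rU rn Hrn) as Brn.
  destruct (diag_dominant_solvable N rL rU lo hi (5 * a) (psiE eta K) diag_margin lo_le_hi
              psiE_diag_dominant (fun j => Phi j - psiG eta K rn j) rL_le_rU
              (fun x j Hx Hj => psiE_lower_face eta N K rL rU Phi K_ge_1 K_lt_N
                                  eta_nonincreasing Phi_bounds x rn j Hx Brn Hj)
              (fun x j Hx Hj => psiE_upper_face eta N K rL rU Phi K_ge_1 K_lt_N
                                  eta_nonincreasing Phi_bounds x rn j Hx Brn Hj))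
    as [rn1 [Hrn1 Hsol]].
  exists rn1. split; [exact Hrn1|]. split.
  - intros j Hj. rewrite (Hsol j Hj). ring.
  - intros s Hs Hstep.
    apply (diag_dominant_unique N rL rU lo hi (5 * a) (psiE eta K) diag_margin
             psiE_diag_dominant s rn1 (in_Omega_in_box _ _ _ _ Hs)
             (in_Omega_in_box _ _ _ _ Hrn1)).
    intros j Hj. rewrite (Hsol j Hj). specialize (Hstep j Hj). lra.
Qed.

Lemma gfi_step_contraction rn rn1 sn sn1 :
  in_Omega N rL rU rn -> in_Omega N rL rU rn1 -> gfi_step eta N K Phi rn rn1 ->
  in_Omega N rL rU sn -> in_Omega N rL rU sn1 -> gfi_step eta N K Phi sn sn1 ->
  supnorm N (fun j => rn1 j - sn1 j)
  <= 8 * a / (lo - 5 * a) * supnorm N (fun j => rn j - sn j).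
Proof.
  intros Hrn Hrn1 Hr Hsn Hsn1 Hs.
  apply in_Omega_in_box in Hrn, Hrn1, Hsn, Hsn1.
  pose proof (diag_dominant_lower_bound N rL rU lo hi (5 * a) (psiE eta K) diag_margin
                psiE_diag_dominant rn1 sn1 Hrn1 Hsn1) as Hlow.
  assert (Hforce : supnorm N (fun j => psiE eta K rn1 j - psiE eta K sn1 j)
                   <= 8 * a * supnorm N (fun j => rn j - sn j)).
  { rewrite (supnorm_ext N _ (fun j => psiG eta K sn j - psiG eta K rn j))
      by (intros j Hj; specialize (Hr j Hj); specialize (Hs j Hj); lra).
    apply supnorm_le.
    - apply Rmult_le_pos; [lra | apply supnorm_nonneg].
    - intros j Hj. rewrite Rabs_minus_sym.
      exact (psiG_lipschitz eta N K rL rU a K_ge_1 K_lt_N a_nonneg eta_lipschitz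
               rn sn Hrn Hsn j Hj). }
  apply Rmult_le_reg_l with (lo - 5 * a); [lra|].
  replace ((lo - 5 * a) * (8 * a / (lo - 5 * a) * supnorm N (fun j => rn j - sn j)))
    with (8 * a * supnorm N (fun j => rn j - sn j)) by (field; lra).
  lra.
Qed.

End GhostForceIteration.

Lemma MVT_pos (f df : R -> R) u v :
  0 < u -> 0 < v -> (forall r, 0 < r -> is_derive f r (df r)) ->
  exists c, Rmin u v <= c <= Rmax u v /\ f u - f v = df c * (u - v).
Proof.
  intros Hu Hv Hd.
  assert (Hmin : 0 < Rmin u v) by (apply Rmin_glb_lt; assumption).
  destruct (MVT_gen f v u df) as [c [Hc Ec]].
  - intros r Hr. apply Hd. rewrite Rmin_comm in Hr. lra.
  - intros r Hr. apply continuity_pt_filterlim, (ex_derive_continuous f r).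
    exists (df r). apply Hd. rewrite Rmin_comm in Hr. lra.
  - exists c. rewrite Rmin_comm, Rmax_comm. auto.
Qed.

Lemma le_of_derive_nonneg (f df : R -> R) u v :
  0 < u <= v -> (forall r, 0 < r -> is_derive f r (df r)) ->
  (forall c, u <= c <= v -> 0 <= df c) -> f u <= f v.
Proof.
  intros Huv Hd Hdf. destruct (MVT_pos f df v u) as [c [Hc Ec]]; try lra; auto.
  rewrite Rmin_right, Rmax_left in Hc by lra. specialize (Hdf c Hc). nra.
Qed.

Lemma ge_of_derive_nonpos (f df : R -> R) u v :
  0 < u <= v -> (forall r, 0 < r -> is_derive f r (df r)) ->
  (forall c, u <= c <= v -> df c <= 0) -> f v <= f u.
Proof.
  intros Huv Hd Hdf. destruct (MVT_pos f df v u) as [c [Hc Ec]]; try lra; auto.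
  rewrite Rmin_right, Rmax_left in Hc by lra. specialize (Hdf c Hc). nra.
Qed.

Section PotentialShape.

Variables (eta eta1 eta2 : R -> R) (rt1 rt2 rL rU : R).
Hypothesis eta_deriv : forall r, 0 < r -> is_derive eta r (eta1 r).
Hypothesis eta1_deriv : forall r, 0 < r -> is_derive eta1 r (eta2 r).
Hypothesis rt1_pos : 0 < rt1.
Hypothesis rt1_lt_rt2 : rt1 < rt2.
Hypothesis eta1_neg : forall r, r > rt1 -> eta1 r < 0.
Hypothesis eta2_neg : forall r, 0 < r < rt2 -> eta2 r < 0.
Hypothesis eta2_pos : forall r, r > rt2 -> eta2 r > 0.
Hypothesis rL_gt : rt2 / 2 < rL.
Hypothesis rL_lt_rU : rL < rU.
Hypothesis eta1_margin : eta1 rU + 13 * eta1 (2 * rL) > 0.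

Lemma eta1_far_bounds c : 2 * rL <= c -> eta1 (2 * rL) <= eta1 c < 0.
Proof.
  intros Hc. split; [|apply eta1_neg; lra].
  apply (le_of_derive_nonneg eta1 eta2); [lra | exact eta1_deriv |].
  intros r Hr. apply Rlt_le, eta2_pos. lra.
Qed.

Lemma Rabs_eta1_far_margin : 13 * Rabs (eta1 (2 * rL)) < eta1 rU.
Proof.
  pose proof (eta1_far_bounds (2 * rL) (Rle_refl _)).
  rewrite Rabs_left by lra. lra.
Qed.

Lemma rU_le_rt1 : rU <= rt1.
Proof.
  destruct (Rle_or_lt rU rt1) as [H | H]; [exact H|].
  pose proof (eta1_neg rU H). pose proof (Rabs_pos (eta1 (2 * rL))).
  pose proof Rabs_eta1_far_margin. lra.
Qed.

Lemma eta1_near_bounds c : rL <= c <= rU -> eta1 rU <= eta1 c <= eta1 rL.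
Proof.
  intros Hc. pose proof rU_le_rt1.
  split; apply (ge_of_derive_nonpos eta1 eta2); auto; try lra;
    intros r Hr; apply Rlt_le, eta2_neg; lra.
Qed.

Lemma eta_slope_near u v : rL <= u <= rU -> rL <= v <= rU ->
  exists p, eta1 rU <= p <= eta1 rL /\ eta u - eta v = p * (u - v).
Proof.
  intros Hu Hv. destruct (MVT_pos eta eta1 u v) as [c [Hc Ec]]; try lra; auto.
  exists (eta1 c). split; [|exact Ec]. apply eta1_near_bounds. split.
  - eapply Rle_trans; [|apply Hc]. apply Rmin_glb; lra.
  - eapply Rle_trans; [apply Hc|]. apply Rmax_lub; lra.
Qed.

Lemma eta_lipschitz_far u v : 2 * rL <= u -> 2 * rL <= v ->
  Rabs (eta u - eta v) <= Rabs (eta1 (2 * rL)) * Rabs (u - v).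
Proof.
  intros Hu Hv. destruct (MVT_pos eta eta1 u v) as [c [Hc Ec]]; try lra; auto.
  assert (Hfar : 2 * rL <= c) by (eapply Rle_trans; [|apply Hc]; apply Rmin_glb; lra).
  destruct (eta1_far_bounds c Hfar). pose proof (eta1_far_bounds (2 * rL) (Rle_refl _)).
  rewrite Ec, Rabs_mult. apply Rmult_le_compat_r; [apply Rabs_pos|].
  rewrite !Rabs_left by lra. lra.
Qed.

Lemma eta_nonincreasing_far u v : 2 * rL <= u <= v -> eta v <= eta u.
Proof.
  intros Huv. apply (ge_of_derive_nonpos eta eta1); [lra | exact eta_deriv |].
  intros c Hc. apply Rlt_le, (eta1_far_bounds c). lra.
Qed.

End PotentialShape.

Theorem theorem5p1
  (phi eta eta1 eta2 eta3 : R -> R)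
  (a0 rt1 rt2 a1 : R) (N K : Z) (rL rU : R) (Phi : Z -> R) :
  C3_chain phi eta eta1 eta2 eta3 ->
  0 < a0 -> a0 < rt1 -> rt1 < rt2 -> rt2 < 2 * a0 -> a0 < a1 ->
  (forall r, 0 < r < rt1 -> eta1 r > 0) ->
  (forall r, r > rt1 -> eta1 r < 0) ->
  (forall r, 0 < r < rt2 -> eta2 r < 0) ->
  (forall r, r > rt2 -> eta2 r > 0) ->
  (forall r, 0 < r < a0 -> eta_hat eta r < 0) ->
  (forall r, r > a0 -> eta_hat eta r > 0) ->
  (* hat eta'(r) = eta'(r) + 4 eta'(2r) *)
  (forall r, 0 < r < a1 -> eta1 r + 4 * eta1 (2 * r) > 0) ->
  (forall r, r > a1 -> eta1 r + 4 * eta1 (2 * r) < 0) ->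
  (2 <= K)%Z -> (K < N - 1)%Z ->
  rt2 / 2 < rL -> rL < rU ->
  eta1 rU + 13 * eta1 (2 * rL) > 0 ->
  (forall j, in_range N j ->
     eta rL + 4 * eta (2 * rL) - 2 * eta (2 * rU) < Phi j /\
     Phi j < eta rU + 4 * eta (2 * rU) - 2 * eta (2 * rL)) ->
  (forall rn, in_Omega N rL rU rn ->
     exists rn1, in_Omega N rL rU rn1 /\ gfi_step eta N K Phi rn rn1 /\
       forall s, in_Omega N rL rU s -> gfi_step eta N K Phi rn s ->
         forall j, in_range N j -> s j = rn1 j) /\
  (forall rn rn1 sn sn1,
     in_Omega N rL rU rn -> in_Omega N rL rU rn1 -> gfi_step eta N K Phi rn rn1 ->
     in_Omega N rL rU sn -> in_Omega N rL rU sn1 -> gfi_step eta N K Phi sn sn1 ->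
     supnorm N (fun j => rn1 j - sn1 j) <=
       8 * Rabs (eta1 (2 * rL)) / (eta1 rU - 5 * Rabs (eta1 (2 * rL)))
         * supnorm N (fun j => rn j - sn j)) /\
  8 * Rabs (eta1 (2 * rL)) / (eta1 rU - 5 * Rabs (eta1 (2 * rL))) < 1.
Proof.
  intros [_ [Deta [Deta1 _]]] Ha0 Ha0rt1 Hrt12 _ _ _ Heta1 Heta2n Heta2p _ _ _ _
    HK HKN HrL HLU Hmargin HPhi.
  assert (Hrt1 : 0 < rt1) by lra.
  assert (HK1 : (1 <= K)%Z) by lia.
  assert (HKN1 : (K < N)%Z) by lia.
  pose proof (Rabs_eta1_far_margin eta1 eta2 rt1 rt2 rL rU
                Deta1 Hrt1 Hrt12 Heta1 Heta2p HrL Hmargin) as Hlo.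
  pose proof (eta1_near_bounds eta1 eta2 rt1 rt2 rL rU
                Deta1 Hrt1 Hrt12 Heta1 Heta2n Heta2p HrL HLU Hmargin rL ltac:(lra)) as Hhi.
  pose proof (eta_lipschitz_far eta eta1 eta2 rt1 rt2 rL
                Deta Deta1 Hrt1 Hrt12 Heta1 Heta2p HrL) as Hlip.
  pose proof (eta_nonincreasing_far eta eta1 eta2 rt1 rt2 rL
                Deta Deta1 Hrt1 Hrt12 Heta1 Heta2p HrL) as Hmono.
  pose proof (eta_slope_near eta eta1 eta2 rt1 rt2 rL rU
                Deta Deta1 Hrt1 Hrt12 Heta1 Heta2n Heta2p HrL HLU Hmargin) as Hslope.
  set (a := Rabs (eta1 (2 * rL))) in *.
  assert (Ha : 0 <= a) by apply Rabs_pos.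
  split; [|split].
  - exact (gfi_step_exists_unique eta N K rL rU a (eta1 rU) (eta1 rL) Phi
             HK1 HKN1 ltac:(lra) Ha ltac:(lra) (proj1 Hhi) Hlip Hmono Hslope HPhi).
  - exact (gfi_step_contraction eta N K rL rU a (eta1 rU) (eta1 rL) Phi
             HK1 HKN1 Ha ltac:(lra) Hlip Hslope).
  - apply Rmult_lt_reg_r with (eta1 rU - 5 * a); [lra|].
    unfold Rdiv. rewrite Rmult_assoc, Rinv_l, Rmult_1_r by lra. lra.
Qed.
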